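(* Let $t\ge3$ be an integer. Every $t$-villa is $(2P_3,C_4,C_6,C_7,T_0)$-free and contains an induced $t$-pentagon. Moreover, every $t$-villa is anticonnected and contains no simplicial and no universal vertices.
   Context: Graphs are finite, simple, nonnull. A graph is $(H_1,\dots,H_m)$-free if it has no induced subgraph isomorphic to any $H_i$. $P_k$, $C_k$ are the path and cycle on $k$ vertices; $2P_3$ is two disjoint copies of $P_3$. $T_0$ is the graph with vertices $p,q,u_0,u_1,u_2,u_3,w_1,w_2,w_3$ and edges $pq,pu_0,pu_2,pu_3,qu_1,qu_2,qu_3,u_0w_1,u_1w_1,u_2w_2,u_3w_3,w_1w_2,w_1w_3,w_2w_3$. For $t\ge3$ the $t$-pentagon is the graph on vertices $a,b_1,\dots,b_t,c_1,\dots,c_t$ where $a$ is adjacent to every $b_i$ and to no $c_i$, $\{b_1,\dots,b_t\}$ is stable, $\{c_1,\dots,c_t\}$ is a clique, and $b_ic_j$ is an edge iff $i=j$. A graph is anticonnected if its complement is connected. A vertex is simplicial if its neighbours form a (possibly empty) clique, universal if adjacent to all other vertices. For disjoint vertex sets $X,Y$, $X$ is complete (anticomplete) to $Y$ if every vertex of $X$ is adjacent (nonadjacent) to every vertex of $Y$. A $t$-villa is a graph $Q$ whose vertex set partitions into nonempty cliques $A,B_1,\dots,B_t,C_1,\dots,C_t$ such that $A$ is complete to $B_1\cup\dots\cup B_t$ and anticomplete to $C_1\cup\dots\cup C_t$; the $B_i$ are pairwise anticomplete; the $C_i$ are pairwise complete; $B_i$ is anticomplete to $C_j$ for $i\ne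 j$; and each $B_i$ can be ordered $b^i_1,\dots,b^i_{r_i}$ with $\emptyset\ne N(b^i_{r_i})\cap C_i\subseteq\dots\subseteq N(b^i_1)\cap C_i=C_i$. *)

(* Graphs: a finType V with a symmetric irreflexive rel E. *)
From mathcomp Require Import all_boot.
Set Implicit Arguments. Unset Strict Implicit. Unset Printing Implicit Defensive.

Section Graphs.
Variables (V : finType) (E : rel V).

Definition has_induced (H : finType) (EH : rel H) : Prop :=
  exists f : H -> V, injective f /\ forall x y, EH x y = E (f x) (f y).

Definition H_free (H : finType) (EH : rel H) : Prop := ~ has_induced EH.

Definition is_clique (S : {set V}) : Prop :=
  forall x y, x \in S -> y \in S -> x != y -> E x y.
Definition complete_to (X Y : {set V}) : Prop :=
  forall x y, x \in X -> y \in Y -> E x y.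
Definition anticomplete_to (X Y : {set V}) : Prop :=
  forall x y, x \in X -> y \in Y -> ~~ E x y.

Definition compl_rel : rel V := fun x y => (x != y) && ~~ E x y.
Definition anticonnected : Prop := forall x y, connect compl_rel x y.

Definition simplicial (v : V) : Prop :=
  forall y z, E v y -> E v z -> y != z -> E y z.
Definition universal (v : V) : Prop := forall y, y != v -> E v y.

Definition nbhd_in (b : V) (C : {set V}) : {set V} := [set c in C | E b c].

(* t-villa. The partition into A, B_1..B_t, C_1..C_t is encoded by a labelling
   part : V -> option ('I_t + 'I_t): None = A, Some (inl i) = B_i,
   Some (inr i) = C_i. *)
Definition is_villa (t : nat) : Prop :=
  exists part : V -> option ('I_t + 'I_t),
    let A := [set v | part v == None] in
    let B := fun i : 'I_t => [set v | part v == Some (inl i)] in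
    let C := fun i : 'I_t => [set v | part v == Some (inr i)] in
    (A != set0 /\ (forall i, B i != set0) /\ (forall i, C i != set0)) /\
    (is_clique A /\ (forall i, is_clique (B i)) /\ (forall i, is_clique (C i))) /\
    ((forall i, complete_to A (B i)) /\ (forall i, anticomplete_to A (C i))) /\
    ((forall i j, i != j -> anticomplete_to (B i) (B j))
       /\ (forall i j, i != j -> complete_to (C i) (C j))
       /\ (forall i j, i != j -> anticomplete_to (B i) (C j))) /\
    (forall i, exists s : seq V,
        [/\ uniq s, [set x in s] = B i,
             sorted (fun x y => nbhd_in y (C i) \subset nbhd_in x (C i)) s,
             (forall x0, nbhd_in (head x0 s) (C i) = C i)
           & (forall x0, nbhd_in (last x0 s) (C i) != set0)]).
End Graphs.

Definition cycle_rel (k : nat) : rel 'I_k :=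
  fun x y => (y == (x.+1 %% k) :> nat) || (x == (y.+1 %% k) :> nat).

Arguments cycle_rel k : clear implicits.

Definition twoP3_rel : rel 'I_6 :=
  fun x y => let e a b := ((x : nat) == a) && ((y : nat) == b) in
    [|| e 0 1, e 1 0, e 1 2, e 2 1, e 3 4, e 4 3, e 4 5 | e 5 4].

(* T0 on 'I_9: p=0, q=1, u0=2, u1=3, u2=4, u3=5, w1=6, w2=7, w3=8 *)
Definition T0_edges : seq (nat * nat) :=
  [:: (0,1); (0,2); (0,4); (0,5); (1,3); (1,4); (1,5); (2,6); (3,6);
      (4,7); (5,8); (6,7); (6,8); (7,8)].
Definition T0_rel : rel 'I_9 :=
  fun x y => ((x : nat, y : nat) \in T0_edges) || ((y : nat, x : nat) \in T0_edges).

(* t-pentagon on option ('I_t + 'I_t): None = a, inl i = b_i, inr i = c_i *)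
Definition pentagon_rel (t : nat) : rel (option ('I_t + 'I_t)) :=
  fun x y => match x, y with
  | None, Some (inl _) | Some (inl _), None => true
  | Some (inl i), Some (inr j) | Some (inr j), Some (inl i) => i == j
  | Some (inr i), Some (inr j) => i != j
  | _, _ => false
  end.
Arguments pentagon_rel t : clear implicits.

From HB Require Import structures.
From mathcomp Require Import all_boot zmodp.

(* Label each vertex of a villa by its kind: A, B (in some B_i) or C (in some C_i).
   The kinds obey local rules that every induced subgraph inherits: A and C are
   cliques with no edge between them, A is complete to B, two B-vertices with a common
   neighbour outside A lie in the same B_i and hence are adjacent, and adjacent
   B-vertices have nested C-neighbourhoods.  An exhaustive search over the labellings
   of 2P3, C4, C6, C7 and T0 shows that none of them can be labelled by these rules.
   The t-pentagon is induced by a vertex of A, a vertex of each B_i complete to C_i and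
   a vertex of each C_i; the remaining properties come from explicit non-edges between
   the parts, which exist as soon as there are two indices. *)

Set Implicit Arguments.
Unset Strict Implicit.
Unset Printing Implicit Defensive.

Lemma all_subset (T : eqType) (a : pred T) (D D' : seq T) :
  {subset D' <= D} -> all a D -> all a D'.
Proof. by move=> sD /allP aD; apply/allP => x /sD /aD. Qed.

Section SortedSupsets.
Variables (T : eqType) (U : finType) (N : T -> {set U}) (s : seq T).
Hypothesis N_sorted : sorted (fun x y => N y \subset N x) s.

Let supset_trans : transitive (fun x y => N y \subset N x).
Proof. by move=> y x z xy yz; apply: subset_trans xy. Qed.

Let nth_supset (x0 : T) i j : i < size s -> j < size s -> i <= j ->
  N (nth x0 s j) \subset N (nth x0 s i).
Proof.
by move=> i_lt j_lt; apply: (sorted_leq_nth supset_trans (fun=> subxx _)); rewrite ?inE.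
Qed.

Lemma sorted_supset_total : {in s &, forall x y, N x \subset N y \/ N y \subset N x}.
Proof.
move=> x y xs ys; rewrite -[x](nth_index x xs) -[y](nth_index x ys).
have [le_xy|/ltnW le_yx] := leqP (index x s) (index y s); [right | left];
  by apply: nth_supset; rewrite ?index_mem.
Qed.

Lemma sorted_supset_last (x0 : T) : {in s, forall x, N (last x0 s) \subset N x}.
Proof.
move=> x xs; have s_gt0 : 0 < size s by case: (s) xs.
rewrite -nth_last -(nth_index x0 xs).
apply: nth_supset; rewrite ?index_mem ?prednK //.
by rewrite -ltnS prednK // index_mem.
Qed.

End SortedSupsets.

Lemma exists_ord_neq (t : nat) (i : 'I_t) : 1 < t -> exists j : 'I_t, j != i.
Proof.
move=> t_gt1; have t_gt0 : 0 < t := ltnW t_gt1.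
case: (eqVneq (Ordinal t_gt0) i) => [<-|]; last by exists (Ordinal t_gt0).
by exists (Ordinal t_gt1).
Qed.

Section VillaLabelling.
Variables (t : nat) (V : finType) (E : rel V).

(* The orderings of the B_i in [is_villa] are only used through what they imply:
   comparable C_i-neighbourhoods, a vertex complete to C_i, and a C_i-neighbour for
   every vertex of B_i. *)
Record villa_labelling (part : V -> option ('I_t + 'I_t)) : Prop := {
  part_clique : forall u v, part u = part v -> u != v -> E u v;
  A_B_complete : forall u v i, part u = None -> part v = Some (inl i) -> E u v;
  A_C_anticomplete : forall u v i, part u = None -> part v = Some (inr i) -> ~~ E u v;
  B_B_anticomplete : forall u v i j,
    part u = Some (inl i) -> part v = Some (inl j) -> i != j -> ~~ E u v;
  C_C_complete : forall u v i j,
    part u = Some (inr i) -> part v = Some (inr j) -> i != j -> E u v;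
  B_C_anticomplete : forall u v i j,
    part u = Some (inl i) -> part v = Some (inr j) -> i != j -> ~~ E u v;
  B_nested : forall u v i, part u = Some (inl i) -> part v = Some (inl i) ->
    (forall c, part c = Some (inr i) -> E u c -> E v c) \/
    (forall c, part c = Some (inr i) -> E v c -> E u c);
  B_dominating : forall i, exists2 b, part b = Some (inl i) &
    forall c, part c = Some (inr i) -> E b c;
  B_C_neighbour : forall b i, part b = Some (inl i) ->
    exists2 c, part c = Some (inr i) & E b c;
  A_nonempty : exists a, part a = None;
  C_nonempty : forall i, exists c, part c = Some (inr i) }.

Lemma is_villa_labelling : is_villa E t -> exists part, villa_labelling part.
Proof.
case=> part /= [[A0 [B0 C0]] [[cA [cB cC]] [[AB AC] [[BB [CC BC]] chain]]]].
exists part.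
pose P o := [set v | part v == o].
have inP o v : part v = o -> v \in P o by rewrite inE => ->.
pose N i b := nbhd_in E b (P (Some (inr i))).
have NP i b c : part c = Some (inr i) -> (c \in N i b) = E b c.
  by move=> pc; rewrite inE inP.
have chainP i : exists2 s : seq V, forall v, (v \in s) = (part v == Some (inl i)) &
    [/\ sorted (fun x y => N i y \subset N i x) s,
        forall x0, N i (head x0 s) = P (Some (inr i)) & forall x0, N i (last x0 s) != set0].
  have [s [_ Bs s_sorted s_head s_last]] := chain i.
  by exists s => // v; move/setP/(_ v): Bs; rewrite !inE.
split.
- move=> u v; case pu: (part u) => [[i|i]|] pv uv.
  + by apply: (cB i); rewrite // inP.
  + by apply: (cC i); rewrite // inP.
  + by apply: cA; rewrite // inP.
- by move=> u v i pu pv; apply: (AB i); apply: inP.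
- by move=> u v i pu pv; apply: (AC i); apply: inP.
- by move=> u v i j pu pv ij; apply: (BB i j ij); apply: inP.
- by move=> u v i j pu pv ij; apply: (CC i j ij); apply: inP.
- by move=> u v i j pu pv ij; apply: (BC i j ij); apply: inP.
- move=> u v i pu pv; have [s Bs [s_sorted _ _]] := chainP i.
  have [||Nuv|Nvu] := sorted_supset_total s_sorted (x := u) (y := v);
    rewrite ?Bs ?pu ?pv //; [left | right] => c pc; rewrite -!(NP i _ _ pc);
    exact: subsetP.
- move=> i; have [[|b s] Bs [_ s_head _]] := chainP i.
    by case/set0Pn: (B0 i) => b; rewrite inE -Bs.
  exists b => [|c pc]; first by apply/eqP; rewrite -Bs mem_head.
  by rewrite -(NP i _ _ pc) (s_head b) inP.
- move=> b i pb; have [s Bs [s_sorted _ s_last]] := chainP i.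
  have /(sorted_supset_last s_sorted b) Nb : b \in s by rewrite Bs pb.
  case/set0Pn: (s_last b) => c /[dup] /(subsetP Nb) bc.
  rewrite !inE => /andP[/eqP pc _]; exists c => //.
  by rewrite -(NP i _ _ pc).
- by case/set0Pn: A0 => a; rewrite inE => /eqP; exists a.
- by move=> i; case/set0Pn: (C0 i) => c; rewrite inE => /eqP; exists c.
Qed.

End VillaLabelling.

Inductive kind := KA | KB | KC.

Definition eqkind (a b : kind) : bool :=
  match a, b with KA, KA | KB, KB | KC, KC => true | _, _ => false end.

Lemma eqkindP : Equality.axiom eqkind.
Proof. by do 2 case; constructor. Qed.

HB.instance Definition _ := hasDecEq.Build kind eqkindP.

Definition kind_of (t : nat) (o : option ('I_t + 'I_t)) : kind :=
  match o with None => KA | Some (inl _) => KB | Some (inr _) => KC end.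
Arguments kind_of {t} o.

Section VillaPattern.
Variables (T : eqType) (R : rel T).

Definition edge_fits (k : T -> kind) (x y : T) : bool :=
  match k x, k y with
  | KA, KC | KC, KA => ~~ R x y
  | KA, KA | KC, KC => (x != y) ==> R x y
  | KA, KB | KB, KA => R x y
  | _, _ => true
  end.

Definition path_fits (k : T -> kind) (x y z : T) : bool :=
  match k x, k z with
  | KB, KB => [&& k y != KA, x != z, R x y & R y z] ==> R x z
  | _, _ => true
  end.

Definition nested_fits (k : T -> kind) (b b' c c' : T) : bool :=
  match k b, k b', k c, k c' with
  | KB, KB, KC, KC => [&& R b b', R b c, ~~ R b' c & R b' c'] ==> R b c'
  | _, _, _, _ => true
  end.

Definition villa_pattern (k : T -> kind) (D : seq T) : bool :=
  [&& all (fun x => all (edge_fits k x) D) D,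
      all (fun x => all (fun y => all (path_fits k x y) D) D) D
    & all (fun b => all (fun b' => all (fun c => all (nested_fits k b b' c) D) D) D) D].

Lemma villa_pattern_sub k (D D' : seq T) :
  {subset D' <= D} -> villa_pattern k D -> villa_pattern k D'.
Proof.
move=> sD /and3P[edges paths nested].
have sub a : all a D -> all a D' := all_subset sD.
apply/and3P; split; apply: (sub _).
- by apply: (sub_all _ edges) => x; apply: (sub _).
- by apply: (sub_all _ paths) => x /sub; apply: sub_all => y; apply: (sub _).
- apply: (sub_all _ nested) => b /sub; apply: sub_all => b' /sub.
  by apply: sub_all => c; apply: (sub _).
Qed.

Lemma eq_in_villa_pattern k1 k2 (D : seq T) :
  {in D, k1 =1 k2} -> villa_pattern k1 D = villa_pattern k2 D.
Proof.
move=> k12; congr [&& _, _ & _].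
- apply: eq_in_all => x xD; apply: eq_in_all => y yD.
  by rewrite /edge_fits !k12.
- apply: eq_in_all => x xD; apply: eq_in_all => y yD; apply: eq_in_all => z zD.
  by rewrite /path_fits !k12.
- apply: eq_in_all => b bD; apply: eq_in_all => b' b'D; apply: eq_in_all => c cD.
  by apply: eq_in_all => c' c'D; rewrite /nested_fits !k12.
Qed.

End VillaPattern.

Lemma villa_pattern_map (T T' : eqType) (R : rel T) (R' : rel T') (k : T -> kind)
    (g : T' -> T) (D : seq T') :
  {in D &, injective g} -> {in D &, forall x y, R' x y = R (g x) (g y)} ->
  villa_pattern R' (k \o g) D = villa_pattern R k (map g D).
Proof.
move=> g_inj gR; have g_eq := inj_in_eq g_inj.
rewrite /villa_pattern !all_map; congr [&& _, _ & _].
- apply: eq_in_all => x xD; rewrite /= all_map; apply: eq_in_all => y yD.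
  by rewrite /edge_fits /= gR ?g_eq.
- apply: eq_in_all => x xD; rewrite /= all_map; apply: eq_in_all => y yD.
  rewrite /= all_map; apply: eq_in_all => z zD.
  by rewrite /path_fits /= !gR ?g_eq.
- apply: eq_in_all => b bD; rewrite /= all_map; apply: eq_in_all => b' b'D.
  rewrite /= all_map; apply: eq_in_all => c cD; rewrite /= all_map.
  by apply: eq_in_all => c' c'D; rewrite /nested_fits /= !gR.
Qed.

(* A labelling fitting on [iota 0 n.+1] also fits on [iota 0 n], so the search only
   extends the fitting labellings of the shorter prefix. *)
Fixpoint villa_patterns (R : rel nat) (n : nat) : seq (seq kind) :=
  if n is m.+1 then
    [seq s <- [seq rcons s a | s <- villa_patterns R m, a <- [:: KA; KB; KC]]
       | villa_pattern R (nth KA s) (iota 0 n)]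
  else [:: [::]].

Lemma villa_patterns_complete (R : rel nat) (k : nat -> kind) (n : nat) :
  villa_pattern R k (iota 0 n) -> mkseq k n \in villa_patterns R n.
Proof.
elim: n => [|n IHn] k_fits; first by rewrite inE.
rewrite mem_filter; apply/andP; split.
  rewrite (@eq_in_villa_pattern _ _ _ k) // => x.
  by rewrite mem_iota => /andP[_ x_lt]; rewrite nth_mkseq.
rewrite mkseqS; apply: allpairs_f; last by case: (k n).
apply: IHn; apply: villa_pattern_sub k_fits => x.
by rewrite !mem_iota !add0n => /andP[-> /ltnW].
Qed.

Section Villa.
Variables (t : nat) (V : finType) (E : rel V) (part : V -> option ('I_t + 'I_t)).
Hypotheses (Esym : symmetric E) (villa : villa_labelling E part).

Lemma C_clique u v i j :
  part u = Some (inr i) -> part v = Some (inr j) -> u != v -> E u v.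
Proof.
move=> pu pv uv; have [ij|] := eqVneq i j; last exact: (C_C_complete villa) pu pv.
by apply: (part_clique villa) _ uv; rewrite pu pv ij.
Qed.

Lemma B_B_edge_index u v i j :
  part u = Some (inl i) -> part v = Some (inl j) -> E u v -> i = j.
Proof.
move=> pu pv; apply: contraTeq => ij.
exact: (B_B_anticomplete villa) pu pv ij.
Qed.

Lemma B_C_edge_index u v i j :
  part u = Some (inl i) -> part v = Some (inr j) -> E u v -> i = j.
Proof.
move=> pu pv; apply: contraTeq => ij.
exact: (B_C_anticomplete villa) pu pv ij.
Qed.

Lemma villa_kind_pattern (D : seq V) : villa_pattern E (kind_of \o part) D.
Proof.
apply/and3P; split.
- apply/allP => x _; apply/allP => y _; rewrite /edge_fits /=.
  case px: (part x) => [[i|i]|]; case py: (part y) => [[j|j]|] //=.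
  + by rewrite Esym (A_B_complete villa py px).
  + by apply/implyP; apply: C_clique px py.
  + by rewrite Esym (A_C_anticomplete villa py px).
  + exact: (A_B_complete villa) px py.
  + exact: (A_C_anticomplete villa) px py.
  + by apply/implyP; apply: (part_clique villa); rewrite px py.
- apply/allP => x _; apply/allP => y _; apply/allP => z _; rewrite /path_fits /=.
  case px: (part x) => [[i|i]|] //=; case pz: (part z) => [[l|l]|] //=.
  apply/implyP; case py: (part y) => [[j|j]|] /and4P[//= _ xz xy yz];
    rewrite Esym in yz.
  + have ij := B_B_edge_index px py xy; have lj := B_B_edge_index pz py yz.
    by apply: (part_clique villa) _ xz; rewrite px pz ij lj.
  + have ij := B_C_edge_index px py xy; have lj := B_C_edge_index pz py yz.
    by apply: (part_clique villa) _ xz; rewrite px pz ij lj.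
- apply/allP => b _; apply/allP => b' _; apply/allP => c _; apply/allP => c' _.
  rewrite /nested_fits /=.
  case pb: (part b) => [[i|i]|] //=; case pb': (part b') => [[j|j]|] //=.
  case pc: (part c) => [[l|l]|] //=; case pc': (part c') => [[m|m]|] //=.
  apply/implyP => /and4P[bb' bc b'c_ b'c'].
  have ij := B_B_edge_index pb pb' bb'; have il := B_C_edge_index pb pc bc.
  have jm := B_C_edge_index pb' pc' b'c'; subst j l m.
  have [Nbb'|Nb'b] := B_nested villa pb pb'; last exact: Nb'b.
  by rewrite (Nbb' c pc bc) in b'c_.
Qed.

(* [EH] is read on [nat] through [inZp] because the enumeration of ['I_n] does not
   reduce under [vm_compute]: it goes through opaque proofs. *)
Lemma villa_induced_free (n : nat) (EH : rel 'I_n.+1) :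
  villa_patterns (fun x y => EH (inZp x) (inZp y)) n.+1 = [::] -> H_free E EH.
Proof.
move=> no_pattern [f [f_inj fE]].
pose D := iota 0 n.+1.
have inZpK x : x \in D -> (inZp x : 'I_n.+1) = x :> nat.
  by rewrite mem_iota => /andP[_ x_le]; apply: modn_small.
have g_inj : {in D &, injective (f \o inZp)}.
  by move=> x y xD yD /f_inj /(congr1 (@nat_of_ord _)); rewrite !inZpK.
have gE : {in D &, forall x y, EH (inZp x) (inZp y) = E ((f \o inZp) x) ((f \o inZp) y)}.
  by move=> x y _ _; rewrite fE.
suff /villa_patterns_complete : villa_pattern (fun x y => EH (inZp x) (inZp y))
    (kind_of \o part \o (f \o inZp)) D by rewrite no_pattern.
by rewrite (villa_pattern_map _ g_inj gE) villa_kind_pattern.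
Qed.

Lemma neq_parts u v : part u != part v -> u != v.
Proof. by apply: contra_neq => ->. Qed.

Lemma villa_has_pentagon : irreflexive E -> has_induced E (pentagon_rel t).
Proof.
move=> Eirr; have [a pa] := A_nonempty villa.
have /fin_all_exists[f fP] : forall o : option ('I_t + 'I_t), exists v, part v = o /\
    forall i, o = Some (inl i) -> forall c, part c = Some (inr i) -> E v c.
  case=> [[i|i]|].
  - by have [b pb b_dom] := B_dominating villa i; exists b; split=> // _ [<-].
  - by have [c pc] := C_nonempty villa i; exists c.
  - by exists a.
have pf o : part (f o) = o by case: (fP o).
have f_dom i : E (f (Some (inl i))) (f (Some (inr i))).
  by case: (fP (Some (inl i))) => _ /(_ i erefl _ (pf _)).
exists f; split=> [x y /(congr1 part)|]; first by rewrite !pf.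
case=> [[i|i]|] [[j|j]|] /=.
- have [<-|ij] := eqVneq i j; first by rewrite Eirr.
  by rewrite (negbTE (B_B_anticomplete villa (pf _) (pf _) ij)).
- have [<-|ij] := eqVneq i j; first by rewrite f_dom.
  by rewrite (negbTE (B_C_anticomplete villa (pf _) (pf _) ij)).
- by rewrite Esym (A_B_complete villa (pf _) (pf _)).
- have [<-|ji] := eqVneq j i; first by rewrite Esym f_dom.
  by rewrite Esym (negbTE (B_C_anticomplete villa (pf _) (pf _) ji)).
- have [<-|ij] := eqVneq i j; first by rewrite Eirr.
  by rewrite (C_C_complete villa (pf _) (pf _) ij).
- by rewrite Esym (negbTE (A_C_anticomplete villa (pf _) (pf _))).
- by rewrite (A_B_complete villa (pf _) (pf _)).
- by rewrite (negbTE (A_C_anticomplete villa (pf _) (pf _))).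
- by rewrite Eirr.
Qed.

Lemma compl_rel_parts u v : part u != part v -> ~~ E u v -> compl_rel E u v.
Proof. by move=> /neq_parts uv nuv; rewrite /compl_rel uv. Qed.

Lemma villa_anticonnected : 1 < t -> anticonnected E.
Proof.
move=> t_gt1; have [a pa] := A_nonempty villa.
have C_to_a c i : part c = Some (inr i) -> compl_rel E c a.
  by move=> pc; rewrite compl_rel_parts ?pa ?pc // Esym (A_C_anticomplete villa pa pc).
have to_a x : connect (compl_rel E) x a.
  case px: (part x) => [[i|i]|].
  - have [j ji] := exists_ord_neq i t_gt1; have [c pc] := C_nonempty villa j.
    apply: connect_trans (connect1 (C_to_a c _ pc)); apply: connect1.
    by rewrite compl_rel_parts ?px ?pc // (B_C_anticomplete villa px pc) // eq_sym.
  - exact: connect1 (C_to_a x _ px).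
  - have [c pc] := C_nonempty villa (Ordinal (ltnW t_gt1)).
    apply: connect_trans (connect1 (C_to_a c _ pc)); apply: connect1.
    by rewrite compl_rel_parts ?px ?pc // (A_C_anticomplete villa px pc).
have compl_sym : symmetric (compl_rel E).
  by move=> u v; rewrite /compl_rel eq_sym Esym.
by move=> x y; apply: connect_trans (to_a x) _; rewrite (sym_connect_sym compl_sym).
Qed.

Lemma villa_not_simplicial v : 1 < t -> ~ simplicial E v.
Proof.
move=> t_gt1 v_simpl; have [a pa] := A_nonempty villa.
case pv: (part v) => [[i|i]|].
- have [c pc vc] := B_C_neighbour villa pv.
  apply: (negP (A_C_anticomplete villa pa pc)); apply: v_simpl => //.
    by rewrite Esym (A_B_complete villa pa pv).
  by rewrite neq_parts ?pa ?pc.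
- have [j ji] := exists_ord_neq i t_gt1; have [c pc] := C_nonempty villa j.
  have [b pb b_dom] := B_dominating villa i.
  apply: (negP (B_C_anticomplete villa pb pc _)); first by rewrite eq_sym.
  apply: v_simpl; rewrite ?neq_parts ?pb ?pc //; first by rewrite Esym b_dom.
  by apply: (C_clique pv pc); rewrite neq_parts // pv pc /= eq_sym.
- have i := Ordinal (ltnW t_gt1); have [j ji] := exists_ord_neq i t_gt1.
  have [b pb _] := B_dominating villa i; have [b' pb' _] := B_dominating villa j.
  apply: (negP (B_B_anticomplete villa pb pb' _)); first by rewrite eq_sym.
  apply: v_simpl; [exact: (A_B_complete villa) pv pb |
                   exact: (A_B_complete villa) pv pb' |].
  by rewrite neq_parts // pb pb' /= eq_sym.
Qed.

Lemma villa_not_universal v : 1 < t -> ~ universal E v.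
Proof.
move=> t_gt1 v_univ; case pv: (part v) => [[i|i]|].
- have [j ji] := exists_ord_neq i t_gt1; have [c pc] := C_nonempty villa j.
  apply: (negP (B_C_anticomplete villa pv pc _)); first by rewrite eq_sym.
  by apply: v_univ; rewrite neq_parts ?pv ?pc.
- have [a pa] := A_nonempty villa.
  apply: (negP (A_C_anticomplete villa pa pv)); rewrite Esym.
  by apply: v_univ; rewrite neq_parts ?pv ?pa.
- have [c pc] := C_nonempty villa (Ordinal (ltnW t_gt1)).
  apply: (negP (A_C_anticomplete villa pv pc)).
  by apply: v_univ; rewrite neq_parts ?pv ?pc.
Qed.

End Villa.

Theorem proposition5p3 (t : nat) (ht : 3 <= t) (V : finType) (E : rel V)
    (Esym : symmetric E) (Eirr : irreflexive E) :
  is_villa E t ->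
  [/\ H_free E twoP3_rel, H_free E (cycle_rel 4), H_free E (cycle_rel 6),
      H_free E (cycle_rel 7) & H_free E T0_rel]
  /\ has_induced E (pentagon_rel t)
  /\ anticonnected E
  /\ (forall v : V, ~ simplicial E v)
  /\ (forall v : V, ~ universal E v).
Proof.
case/is_villa_labelling=> part villa.
have t_gt1 : 1 < t by apply: leq_trans ht.
split; first by split; apply: (villa_induced_free Esym villa); vm_compute.
split; first exact: villa_has_pentagon Esym villa Eirr.
split; first exact: villa_anticonnected Esym villa t_gt1.
by split=> v; [apply: villa_not_simplicial Esym villa v t_gt1
              | apply: villa_not_universal Esym villa v t_gt1].
Qed.
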